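(* Let $\gamma>0$ and $\mathbf y^{\mathrm{in}},\mathbf z^{\mathrm{in}}\in\underline{\mathcal Y}(\gamma)$, and let $(\mathbf Y^{(i)})_{i=0}^n$ and $(\mathbf Z^{(i)})_{i=0}^n$ be $\underline{\mathcal Y}_{\mathcal T}(\gamma)$-valued sequences, driven by the same $\mathbf W$, each satisfying the iteration scheme (It), with initial conditions $\mathbf y^{\mathrm{in}}$ and $\mathbf z^{\mathrm{in}}$ respectively. Then almost surely: (a) $\mathbf Y^{(0)}(\cdot)\ge\mathbf Y^{(1)}(\cdot)\ge\cdots\ge\mathbf Y^{(n)}(\cdot)$; (b) if $\mathbf y^{\mathrm{in}}\ge\mathbf z^{\mathrm{in}}$, then $\mathbf Y^{(i)}(\cdot)\ge\mathbf Z^{(i)}(\cdot)$ for $i=0,\dots,n$.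
   Context: Fixed $\beta\ge1$. $\hat{\mathbb Z}=\tfrac12+\mathbb Z$; index intervals use $(i,j)=(j,i)$ if $j<i$; $z_{\mathcal I}:=\sum_{b\in\mathcal I\cap\hat{\mathbb Z}}z_b$; $\mathrm{Av}_{\mathcal I}(\mathbf y)=|\mathcal I\cap\hat{\mathbb Z}|^{-1}\sum_{a\in\mathcal I\cap\hat{\mathbb Z}}y_a$. $\underline{\mathcal Y}(\gamma)=\{\mathbf y\in(0,\infty)^{\hat{\mathbb Z}}:\liminf_{|m|\to\infty}\mathrm{Av}_{(0,m)}(\mathbf y)\ge\gamma\}$; $C_+([0,\infty))=\{y\in C([0,\infty)):y>0\}$; $\underline{\mathcal Y}_{\mathcal T}(\gamma)=\{\mathbf y\in C_+([0,\infty))^{\hat{\mathbb Z}}:\liminf_{|m|\to\infty}\inf_{s\le t}\mathrm{Av}_{(0,m)}(\mathbf y(s))\ge\gamma\ \forall t\}$. $W_a=B_{a+1/2}-B_{a-1/2}$ with independent standard Brownian motions. $\psi_a(y,\mathbf z)=\tfrac12\sum_{i\in\mathbb Z:|i-a|>1}\frac{y}{z_{(a,i)}(y+z_{(a,i)})}$ ($y>0$), $\psi_a(0,\cdot)=0$. Iteration scheme (It) with initial condition $\mathbf y^{\mathrm{in}}$: $Y^{(0)}_a(t)=y^{\mathrm{in}}_a+W_a(t)+\beta\int_0^t\frac{ds}{Y^{(0)}_a(s)}$; for $n\ge1$, $Y^{(n)}_a(t)=y^{\mathrm{in}}_a+W_a(t)+\beta\int_0^t\big(\frac1{Y^{(n)}_a(s)}-\psi_a(Y^{(n)}_a(s),\mathbf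 Y^{(n-1)}(s))\big)ds$, $a\in\hat{\mathbb Z}$. Order: coordinatewise and for all times. *)

From Stdlib Require Import Reals Lra Lia ZArith ClassicalEpsilon.
Open Scope R_scope.

(* The half-integer lattice  Zhat = 1/2 + Z  is encoded by Z:              *)
(*      k : Z   represents the half-integer   a = k + 1/2.                 *)
(* Brownian motions B_b are indexed by the integers b : Z.                 *)
(* Hence W_a = B_{a+1/2} - B_{a-1/2} becomes  W k = B (k+1) - B k.         *)

Fixpoint sumN (f : nat -> R) (n : nat) : R :=
  match n with
  | O => 0
  | S n' => sumN f n' + f n'
  end.

(* sum_{m = lo}^{hi} f m  over integers (0 if hi < lo) *)
Definition sumZ (f : Z -> R) (lo hi : Z) : R :=
  sumN (fun j => f (lo + Z.of_nat j)%Z) (Z.to_nat (hi - lo + 1)).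

(* z_{(a,i)} for a = k + 1/2 (k : Z) and i : Z :
   sum of z_b over half-integers b strictly between a and i.
   If i > a : b = m + 1/2 with k+1 <= m <= i-1;
   if i < a : b = m + 1/2 with i <= m <= k-1. *)
Definition zint (z : Z -> R) (k i : Z) : R :=
  if Z.ltb k i then sumZ z (k + 1) (i - 1) else sumZ z i (k - 1).

(* Av_{(0,m)}(y) for an integer m : average of y_b over the half-integers
   b in the open interval between 0 and m.
   m > 0 : b = j + 1/2, 0 <= j <= m-1 ;  m < 0 : b = j + 1/2, m <= j <= -1.
   (m = 0 : empty interval, value irrelevant, set to 0.) *)
Definition Av0 (y : Z -> R) (m : Z) : R :=
  if Z.ltb 0 m then sumZ y 0 (m - 1) / IZR m
  else if Z.ltb m 0 then sumZ y m (-1) / IZR (- m)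
  else 0.

(* Underline-Y(gamma): positive configurations with
   liminf_{|m| -> oo} Av_{(0,m)}(y) >= gamma. *)
Definition in_Ylow (gamma : R) (y : Z -> R) : Prop :=
  (forall k, 0 < y k) /\
  (forall eps, 0 < eps -> exists M : Z, forall m : Z,
       (M <= Z.abs m)%Z -> gamma - eps <= Av0 y m).

Definition cont_nonneg (f : R -> R) : Prop :=
  forall t, 0 <= t -> forall eps, 0 < eps -> exists delta, 0 < delta /\
    forall s, 0 <= s -> Rabs (s - t) < delta -> Rabs (f s - f t) < eps.

Definition in_Cplus (f : R -> R) : Prop :=
  cont_nonneg f /\ (forall t, 0 <= t -> 0 < f t).

(* Underline-Y_T(gamma): configurations of positive continuous paths with
   liminf_{|m|->oo} inf_{s<=t} Av_{(0,m)}(y(s)) >= gamma for every t. *)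
Definition in_YlowT (gamma : R) (y : Z -> R -> R) : Prop :=
  (forall k, in_Cplus (y k)) /\
  (forall t, 0 <= t -> forall eps, 0 < eps -> exists M : Z, forall m : Z,
       (M <= Z.abs m)%Z ->
       forall s, 0 <= s <= t -> gamma - eps <= Av0 (fun k => y k s) m).

(* Value of a series of reals: its sum if it converges, 0 otherwise. *)
Definition series (u : nat -> R) : R :=
  match excluded_middle_informative (exists l, infinite_sum u l) with
  | left H => proj1_sig (constructive_indefinite_description _ H)
  | right _ => 0
  end.

Definition psi_term (y zz : R) : R := y / (zz * (y + zz)).

(* psi_a(y, z) for a = k + 1/2:
   (1/2) sum_{i in Z, |i-a|>1} y / (z_{(a,i)} (y + z_{(a,i)})),  psi_a(0,.)=0.
   The integers i with |i - a| > 1 are i >= k+2 and i <= k-1; the sum is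
   split into these two one-sided series. *)
Definition psi (k : Z) (y : R) (z : Z -> R) : R :=
  if Rlt_dec 0 y then
    / 2 * (series (fun j => psi_term y (zint z k (k + 2 + Z.of_nat j)%Z))
         + series (fun j => psi_term y (zint z k (k - 1 - Z.of_nat j)%Z)))
  else 0.

Definition is_integral (f : R -> R) (t I : R) : Prop :=
  exists pr : Riemann_integrable f 0 t, RiemannInt pr = I.

Definition Wd (B : Z -> R -> R) (k : Z) (t : R) : R := B (k + 1)%Z t - B k t.

Definition iteration (beta : R) (B : Z -> R -> R) (yin : Z -> R) (n : nat)
    (Y : nat -> Z -> R -> R) : Prop :=
  (forall k t, 0 <= t ->
     is_integral (fun s => / Y O k s) t
       ((Y O k t - yin k - Wd B k t) / beta)) /\
  (forall i, (1 <= i <= n)%nat -> forall k t, 0 <= t ->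
     is_integral (fun s => / Y i k s - psi k (Y i k s) (fun b => Y (i - 1)%nat b s)) t
       ((Y i k t - yin k - Wd B k t) / beta)).

Definition path_le (Y1 Y2 : Z -> R -> R) : Prop :=
  forall k t, 0 <= t -> Y1 k t <= Y2 k t.

(* Every level of the scheme solves an equation X(t) = x + W(t) + beta int_0^t f(s) ds
   driven by the same W, so the difference of two levels is continuous and, on any
   interval where it is negative, its increments are those of beta int (f1 - f2).
   If there [f2 <= f1] whenever the order fails, the difference cannot leave [0, oo)
   (comparison principle).  The drift [1/y - psi_a(y, z)] is antitone in [y] and monotone
   in the configuration [z]: every term of [psi_a] is, and the series converge because a
   positive lower density [gamma] makes [z_(a,i)] grow linearly in [|i|], so the terms are
   O(1/i^2).  Both orderings then follow by induction on the level. *)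
From Stdlib Require Import Reals ZArith Lra Lia ClassicalEpsilon Classical.
Open Scope R_scope.

Lemma sumN_ext f g n : (forall j, (j < n)%nat -> f j = g j) -> sumN f n = sumN g n.
Proof.
  induction n as [|n IH]; intros H; simpl; [reflexivity|].
  rewrite IH, H; [reflexivity|lia|intros; apply H; lia].
Qed.

Lemma sumN_le f g n : (forall j, (j < n)%nat -> f j <= g j) -> sumN f n <= sumN g n.
Proof.
  induction n as [|n IH]; intros H; simpl; [lra|].
  assert (f n <= g n) by (apply H; lia).
  assert (sumN f n <= sumN g n) by (apply IH; intros; apply H; lia).
  lra.
Qed.

Lemma sumN_ge0 f n : (forall j, 0 <= f j) -> 0 <= sumN f n.
Proof. intros H; induction n; simpl; [lra|]. specialize (H n); lra. Qed.

Lemma sumN_add f a b : sumN f (a + b) = sumN f a + sumN (fun j => f (a + j)%nat) b.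
Proof.
  induction b as [|b IH]; simpl; [rewrite Nat.add_0_r; lra|].
  rewrite Nat.add_succ_r; simpl; rewrite IH; lra.
Qed.

Lemma sumN_recl f n : sumN f (S n) = f O + sumN (fun j => f (S j)) n.
Proof.
  induction n as [|n IH]; [simpl; lra|].
  change (sumN f (S (S n))) with (sumN f (S n) + f (S n)). rewrite IH; simpl; lra.
Qed.

Lemma sumN_rev f n : sumN f n = sumN (fun j => f (n - 1 - j)%nat) n.
Proof.
  induction n as [|n IH]; [reflexivity|].
  rewrite (sumN_recl (fun j => f (S n - 1 - j)%nat)).
  change (sumN f (S n)) with (sumN f n + f n). rewrite IH.
  replace (S n - 1 - 0)%nat with n by lia.
  rewrite (sumN_ext (fun j => f (n - 1 - j)%nat) (fun j => f (S n - 1 - S j)%nat)); [lra|].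
  intros; f_equal; lia.
Qed.

Lemma sumN_le_len f a b : (forall j, 0 <= f j) -> (a <= b)%nat -> sumN f a <= sumN f b.
Proof.
  intros H Hab. replace b with (a + (b - a))%nat by lia. rewrite sumN_add.
  pose proof (sumN_ge0 (fun j => f (a + j)%nat) (b - a) (fun j => H _)). lra.
Qed.

Lemma sumZ_gt0 z lo hi : (forall b, 0 < z b) -> (lo <= hi)%Z -> 0 < sumZ z lo hi.
Proof.
  intros Hz H. unfold sumZ.
  replace (Z.to_nat (hi - lo + 1)) with (S (Z.to_nat (hi - lo))) by lia. simpl.
  pose proof (sumN_ge0 (fun j => z (lo + Z.of_nat j)%Z) (Z.to_nat (hi - lo))
    (fun j => Rlt_le _ _ (Hz _))).
  pose proof (Hz (lo + Z.of_nat (Z.to_nat (hi - lo)))%Z). lra.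
Qed.

(** * Linear growth of partial sums *)

Definition liminf_avg_ge (f : Z -> R) (g : R) : Prop :=
  forall eps, 0 < eps -> exists M : nat, forall m : nat, (M <= m)%nat ->
    g - eps <= sumN (fun j => f (Z.of_nat j)) m / INR m.

Lemma in_Ylow_liminf_avg_right z g : in_Ylow g z -> liminf_avg_ge z g.
Proof.
  intros [_ Hav] eps He. destruct (Hav eps He) as [M HM].
  exists (S (Z.to_nat M)). intros m Hm.
  specialize (HM (Z.of_nat m) ltac:(lia)).
  unfold Av0, sumZ in HM. destruct (Z.ltb_spec 0 (Z.of_nat m)); [|lia].
  replace (Z.to_nat (Z.of_nat m - 1 - 0 + 1)) with m in HM by lia.
  rewrite <- INR_IZR_INZ in HM. erewrite sumN_ext; [exact HM|].
  intros; simpl; f_equal; lia.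
Qed.

Lemma in_Ylow_liminf_avg_left z g : in_Ylow g z -> liminf_avg_ge (fun x => z (-1 - x)%Z) g.
Proof.
  intros [_ Hav] eps He. destruct (Hav eps He) as [M HM].
  exists (S (Z.to_nat M)). intros m Hm.
  specialize (HM (- Z.of_nat m)%Z ltac:(lia)).
  unfold Av0, sumZ in HM. destruct (Z.ltb_spec 0 (- Z.of_nat m)); [lia|].
  destruct (Z.ltb_spec (- Z.of_nat m) 0); [|lia].
  replace (Z.to_nat (-1 - - Z.of_nat m + 1)) with m in HM by lia.
  rewrite Z.opp_involutive, <- INR_IZR_INZ, sumN_rev in HM.
  erewrite sumN_ext; [exact HM|]. intros; cbv beta; f_equal; lia.
Qed.

Section LinearGrowth.
Variables (f : Z -> R) (g : R).
Hypotheses (g_gt0 : 0 < g) (f_gt0 : forall x, 0 < f x) (f_avg : liminf_avg_ge f g).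

Lemma sumN_ge_half_eventually :
  exists M : nat, forall m, (M <= m)%nat -> g / 2 * INR m <= sumN (fun j => f (Z.of_nat j)) m.
Proof.
  destruct (f_avg (g / 2)) as [M HM]; [lra|]. exists (S M). intros m Hm.
  specialize (HM m ltac:(lia)).
  assert (0 < INR m) by (apply lt_0_INR; lia).
  apply (Rmult_le_compat_r (INR m)) in HM; [|lra].
  unfold Rdiv in HM. rewrite Rmult_assoc, Rinv_l in HM by lra. lra.
Qed.

(* Shifting the window start by [lo] costs a bounded amount, absorbed by halving the slope. *)
Lemma shifted_sumN_ge_eventually (lo : Z) :
  exists J : nat, forall N, (J <= N)%nat ->
    g / 4 * INR N <= sumN (fun j => f (lo + Z.of_nat j)%Z) N.
Proof.
  destruct sumN_ge_half_eventually as [M HM].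
  assert (f_ge0 : forall j, 0 <= f j) by (intros; apply Rlt_le, f_gt0).
  destruct (Z_le_gt_dec 0 lo) as [Hlo|Hlo].
  - set (p := Z.to_nat lo). set (C := sumN (fun j => f (Z.of_nat j)) p).
    destruct (INR_unbounded (4 * C / g)) as [J1 HJ1].
    exists (M + J1)%nat. intros N HN.
    pose proof (HM (p + N)%nat ltac:(lia)) as Hsum.
    rewrite sumN_add, plus_INR in Hsum. fold C in Hsum.
    rewrite (sumN_ext _ (fun j => f (lo + Z.of_nat j)%Z)) in Hsum
      by (intros; f_equal; unfold p; lia).
    assert (INR J1 <= INR N) by (apply le_INR; lia).
    assert (0 <= INR p) by apply pos_INR.
    assert (4 * C <= INR N * g).
    { replace (4 * C) with (4 * C / g * g) by (field; lra). apply Rmult_le_compat_r; lra. }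
    nra.
  - set (p := Z.to_nat (- lo)).
    exists (2 * p + M)%nat. intros N HN.
    replace N with (p + (N - p))%nat by lia. rewrite sumN_add, plus_INR.
    pose proof (sumN_ge0 (fun j => f (lo + Z.of_nat j)%Z) p (fun j => f_ge0 _)).
    rewrite (sumN_ext (fun j => f (lo + Z.of_nat (p + j))%Z) (fun j => f (Z.of_nat j)))
      by (intros; f_equal; unfold p; lia).
    pose proof (HM (N - p)%nat ltac:(lia)).
    assert (INR (2 * p) <= INR N) as H2p by (apply le_INR; lia).
    rewrite mult_INR in H2p. simpl (INR 2) in H2p.
    rewrite minus_INR in * by lia. nra.
Qed.

Lemma shifted_sumN_ge_linear (lo : Z) :
  exists c, 0 < c /\ forall j, c * INR (S j) <= sumN (fun j' => f (lo + Z.of_nat j')%Z) (S j).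
Proof.
  destruct (shifted_sumN_ge_eventually lo) as [J HJ].
  assert (0 < INR (S J)) by (apply lt_0_INR; lia).
  pose proof (f_gt0 lo).
  exists (Rmin (g / 4) (f lo / INR (S J))). split.
  { apply Rmin_glb_lt; [lra|]. apply Rdiv_lt_0_compat; lra. }
  intros j. destruct (le_lt_dec J (S j)).
  - eapply Rle_trans; [|apply HJ; assumption].
    apply Rmult_le_compat_r; [apply pos_INR|apply Rmin_l].
  - eapply Rle_trans; [apply Rmult_le_compat_r; [apply pos_INR|apply Rmin_r]|].
    eapply Rle_trans; [|apply (sumN_le_len _ 1); [intros; apply Rlt_le, f_gt0|lia]].
    replace (sumN (fun j' => f (lo + Z.of_nat j')%Z) 1) with (f lo)
      by (simpl; rewrite Z.add_0_r; ring).
    assert (INR (S j) <= INR (S J)) by (apply le_INR; lia).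
    assert (f lo / INR (S J) * INR (S j) <= f lo / INR (S J) * INR (S J)).
    { apply Rmult_le_compat_l; [apply Rlt_le, Rdiv_lt_0_compat|]; lra. }
    replace (f lo / INR (S J) * INR (S J)) with (f lo) in * by (field; lra). lra.
Qed.

End LinearGrowth.

Lemma series_spec u : (exists l, infinite_sum u l) -> infinite_sum u (series u).
Proof.
  intros H. unfold series. destruct excluded_middle_informative as [h|h]; [|contradiction].
  exact (proj2_sig (constructive_indefinite_description _ h)).
Qed.

Lemma sum_f_R0_ge0 u n : (forall j, 0 <= u j) -> 0 <= sum_f_R0 u n.
Proof. intros H; induction n; simpl; [apply H|]. specialize (H (S n)); lra. Qed.

Lemma series_ge0 u : (forall j, 0 <= u j) -> 0 <= series u.
Proof.
  intros H. unfold series. destruct excluded_middle_informative as [h|h]; [|lra].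
  apply (@Rle_cv_lim (fun _ => 0) (sum_f_R0 u) 0);
    [intros; apply sum_f_R0_ge0, H | |exact (proj2_sig (constructive_indefinite_description _ h))].
  intros eps He; exists O; intros; unfold Rdist; rewrite Rminus_0_r, Rabs_R0; lra.
Qed.

Lemma infinite_sum_le_ex u v : (forall j, 0 <= u j <= v j) ->
  (exists l, infinite_sum v l) -> exists l, infinite_sum u l.
Proof.
  intros H [l Hl]. destruct (Rseries_CV_comp u v H (exist _ l Hl)) as [l' Hl'].
  exists l'; exact Hl'.
Qed.

Lemma series_le u v : (forall j, 0 <= u j <= v j) -> (exists l, infinite_sum v l) ->
  series u <= series v.
Proof.
  intros H Hv. pose proof (series_spec u (infinite_sum_le_ex u v H Hv)) as Hu.
  apply series_spec in Hv.
  apply (Rle_cv_lim (fun n => sum_Rle u v n (fun j _ => proj2 (H j))) Hu Hv).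
Qed.

Lemma sum_telescope K n :
  sum_f_R0 (fun j => K / ((INR j + 1) * (INR j + 2))) n = K - K / (INR n + 2).
Proof.
  induction n as [|n IH]; [simpl; field|].
  rewrite tech5, IH, S_INR.
  assert (0 <= INR n) by apply pos_INR. field; lra.
Qed.

Lemma infinite_sum_telescope K : infinite_sum (fun j => K / ((INR j + 1) * (INR j + 2))) K.
Proof.
  intros eps He. destruct (INR_unbounded (Rabs K / eps)) as [N HN]. exists N. intros m Hm.
  rewrite sum_telescope. unfold Rdist.
  replace (K - K / (INR m + 2) - K) with (- (K / (INR m + 2))) by ring.
  assert (INR N <= INR m) by (apply le_INR; lia).
  assert (0 <= INR N) by apply pos_INR.
  unfold Rdiv. rewrite Rabs_Ropp, Rabs_mult, Rabs_inv, (Rabs_right (INR m + 2)) by lra.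
  apply (Rmult_lt_reg_r (INR m + 2)); [lra|].
  replace (Rabs K * / (INR m + 2) * (INR m + 2)) with (Rabs K) by (field; lra).
  assert (Rabs K <= INR N * eps).
  { replace (Rabs K) with (Rabs K / eps * eps) by (field; lra). apply Rmult_le_compat_r; lra. }
  nra.
Qed.

(** * The interaction term psi *)

Lemma psi_term_ge0 y p : 0 < y -> 0 < p -> 0 <= psi_term y p.
Proof. intros. unfold psi_term. apply Rlt_le, Rdiv_lt_0_compat; nra. Qed.

Lemma psi_term_le_quadratic y p c x : 0 < y -> 0 < c -> 0 <= x -> c * (x + 1) <= p ->
  psi_term y p <= (2 * y / (c * c)) / ((x + 1) * (x + 2)).
Proof.
  intros Hy Hc Hx Hp. unfold psi_term.
  assert (0 < c * (x + 1)) by nra.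
  replace (2 * y / (c * c) / ((x + 1) * (x + 2)))
    with (y / (c * c * (x + 1) * (x + 2) / 2)) by (field; lra).
  unfold Rdiv. apply Rmult_le_compat_l; [lra|]. apply Rinv_le_contravar.
  - assert (0 < c * c * ((x + 1) * (x + 2))) by (apply Rmult_lt_0_compat; nra). nra.
  - assert ((c * (x + 1)) * (c * (x + 1)) <= p * p) by (apply Rmult_le_compat; lra). nra.
Qed.

Lemma psi_term_antitone y y' p p' : 0 < y -> y <= y' -> 0 < p' -> p' <= p ->
  psi_term y p <= psi_term y' p'.
Proof.
  intros Hy Hyy Hp Hpp. apply Rle_trans with (psi_term y' p).
  - unfold psi_term.
    replace (y / (p * (y + p))) with (/ p - / (y + p)) by (field; lra).
    replace (y' / (p * (y' + p))) with (/ p - / (y' + p)) by (field; lra).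
    assert (/ (y' + p) <= / (y + p)) by (apply Rinv_le_contravar; lra). lra.
  - unfold psi_term, Rdiv. apply Rmult_le_compat_l; [lra|]. apply Rinv_le_contravar; nra.
Qed.

Lemma psi_term_summable (P : nat -> R) y c : 0 < y -> 0 < c ->
  (forall j, c * INR (S j) <= P j) -> exists l, infinite_sum (fun j => psi_term y (P j)) l.
Proof.
  intros Hy Hc HP.
  apply (infinite_sum_le_ex _ (fun j => (2 * y / (c * c)) / ((INR j + 1) * (INR j + 2)))).
  - intros j. pose proof (pos_INR j). specialize (HP j). rewrite S_INR in HP.
    split; [apply psi_term_ge0; nra|]. apply psi_term_le_quadratic; lra.
  - eexists; apply infinite_sum_telescope.
Qed.

Lemma zint_right z k j :
  zint z k (k + 2 + Z.of_nat j) = sumN (fun j' => z (k + 1 + Z.of_nat j')%Z) (S j).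
Proof.
  unfold zint, sumZ. destruct (Z.ltb_spec k (k + 2 + Z.of_nat j)); [|lia].
  f_equal. lia.
Qed.

Lemma zint_left z k j :
  zint z k (k - 1 - Z.of_nat j) = sumN (fun j' => z (-1 - (- k + Z.of_nat j'))%Z) (S j).
Proof.
  unfold zint, sumZ. destruct (Z.ltb_spec k (k - 1 - Z.of_nat j)); [lia|].
  replace (Z.to_nat (k - 1 - (k - 1 - Z.of_nat j) + 1)) with (S j) by lia.
  rewrite sumN_rev. apply sumN_ext. intros; f_equal; lia.
Qed.

Lemma zint_right_gt0 z k j : (forall b, 0 < z b) -> 0 < zint z k (k + 2 + Z.of_nat j).
Proof.
  intros Hz. unfold zint. destruct (Z.ltb_spec k (k + 2 + Z.of_nat j)); [|lia].
  apply sumZ_gt0; auto; lia.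
Qed.

Lemma zint_left_gt0 z k j : (forall b, 0 < z b) -> 0 < zint z k (k - 1 - Z.of_nat j).
Proof.
  intros Hz. unfold zint. destruct (Z.ltb_spec k (k - 1 - Z.of_nat j)); [lia|].
  apply sumZ_gt0; auto; lia.
Qed.

Lemma zint_le z z' k i : (forall b, z' b <= z b) -> zint z' k i <= zint z k i.
Proof. intros H. unfold zint, sumZ. destruct (Z.ltb k i); apply sumN_le; intros; apply H. Qed.

Lemma psi_right_summable z g k y : 0 < g -> in_Ylow g z -> 0 < y ->
  exists l, infinite_sum (fun j => psi_term y (zint z k (k + 2 + Z.of_nat j))) l.
Proof.
  intros Hg Hz Hy.
  destruct (shifted_sumN_ge_linear z g Hg (proj1 Hz) (in_Ylow_liminf_avg_right z g Hz) (k + 1))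
    as [c [Hc Hlin]].
  apply (psi_term_summable _ y c Hy Hc). intros j. rewrite zint_right. apply Hlin.
Qed.

Lemma psi_left_summable z g k y : 0 < g -> in_Ylow g z -> 0 < y ->
  exists l, infinite_sum (fun j => psi_term y (zint z k (k - 1 - Z.of_nat j))) l.
Proof.
  intros Hg Hz Hy.
  destruct (shifted_sumN_ge_linear (fun x => z (-1 - x)%Z) g Hg (fun x => proj1 Hz _)
    (in_Ylow_liminf_avg_left z g Hz) (- k)) as [c [Hc Hlin]].
  apply (psi_term_summable _ y c Hy Hc). intros j. rewrite zint_left. apply Hlin.
Qed.

Lemma psi_ge0 k y z : (forall b, 0 < z b) -> 0 <= psi k y z.
Proof.
  intros Hz. unfold psi. destruct (Rlt_dec 0 y); [|lra].
  apply Rmult_le_pos; [lra|]. apply Rplus_le_le_0_compat; apply series_ge0; intros;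
    apply psi_term_ge0; auto; [apply zint_right_gt0|apply zint_left_gt0]; auto.
Qed.

(* Only the smaller configuration [z'] needs a density bound: it dominates the series. *)
Lemma psi_monotone k y y' z z' g : 0 < g -> 0 < y -> y <= y' -> (forall b, z' b <= z b) ->
  in_Ylow g z' -> psi k y z <= psi k y' z'.
Proof.
  intros Hg Hy Hyy Hzz Hz'. pose proof (proj1 Hz') as Hpos.
  unfold psi. destruct (Rlt_dec 0 y); [|lra]. destruct (Rlt_dec 0 y'); [|lra].
  apply Rmult_le_compat_l; [lra|]. apply Rplus_le_compat; apply series_le.
  - intros j. pose proof (zint_right_gt0 z' k j Hpos). pose proof (zint_le z z' k (k + 2 + Z.of_nat j) Hzz).
    split; [apply psi_term_ge0|apply psi_term_antitone]; lra.
  - apply (psi_right_summable z' g); auto.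
  - intros j. pose proof (zint_left_gt0 z' k j Hpos). pose proof (zint_le z z' k (k - 1 - Z.of_nat j) Hzz).
    split; [apply psi_term_ge0|apply psi_term_antitone]; lra.
  - apply (psi_left_summable z' g); auto.
Qed.

Lemma drift_antitone k y y' z z' g : 0 < g -> 0 < y -> y <= y' -> (forall b, z' b <= z b) ->
  in_Ylow g z' -> / y' - psi k y' z' <= / y - psi k y z.
Proof.
  intros Hg Hy Hyy Hzz Hz'. pose proof (psi_monotone k y y' z z' g Hg Hy Hyy Hzz Hz').
  assert (/ y' <= / y) by (apply Rinv_le_contravar; lra). lra.
Qed.

Lemma drift_le_inv k y y' z : 0 < y -> y <= y' -> (forall b, 0 < z b) ->
  / y' - psi k y' z <= / y.
Proof.
  intros Hy Hyy Hz. pose proof (psi_ge0 k y' z Hz).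
  assert (/ y' <= / y) by (apply Rinv_le_contravar; lra). lra.
Qed.

(** * Comparison principle *)

Lemma cont_nonneg_sub f g : cont_nonneg f -> cont_nonneg g -> cont_nonneg (fun x => f x - g x).
Proof.
  intros Hf Hg t Ht eps He.
  destruct (Hf t Ht (eps / 2) ltac:(lra)) as [d1 [Hd1 H1]].
  destruct (Hg t Ht (eps / 2) ltac:(lra)) as [d2 [Hd2 H2]].
  exists (Rmin d1 d2). split; [apply Rmin_glb_lt; auto|]. intros s Hs Hsd.
  specialize (H1 s Hs (Rlt_le_trans _ _ _ Hsd (Rmin_l _ _))).
  specialize (H2 s Hs (Rlt_le_trans _ _ _ Hsd (Rmin_r _ _))).
  apply Rabs_def2 in H1; apply Rabs_def2 in H2. apply Rabs_def1; lra.
Qed.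

(* Take [s] the last time before [t] with [D s >= 0]; then [D < 0] on (s, t]. *)
Lemma ge0_of_nondecreasing_while_neg (D : R -> R) : cont_nonneg D -> 0 <= D 0 ->
  (forall s t, 0 <= s <= t -> (forall u, s < u <= t -> D u < 0) -> D s <= D t) ->
  forall t, 0 <= t -> 0 <= D t.
Proof.
  intros Hc H0 Hinc t Ht. destruct (Rle_lt_dec 0 (D t)) as [|Hneg]; [assumption|exfalso].
  set (E := fun x => 0 <= x <= t /\ 0 <= D x).
  destruct (completeness E) as [s [Hub Hlub]].
  { exists t; intros x [Hx _]; lra. }
  { exists 0; unfold E; lra. }
  assert (Hs0 : 0 <= s) by (apply Hub; unfold E; lra).
  assert (Hst : s <= t) by (apply Hlub; intros x [Hx _]; lra).
  assert (HDs : 0 <= D s).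
  { destruct (Rle_lt_dec 0 (D s)) as [|q]; [assumption|exfalso].
    destruct (Hc s Hs0 (- D s) ltac:(lra)) as [del [Hdel Hd]].
    destruct (classic (exists x, E x /\ s - del < x)) as [[x [[Hx HDx] Hxs]]|Hn].
    - assert (x <= s) by (apply Hub; split; auto).
      specialize (Hd x ltac:(lra) ltac:(apply Rabs_def1; lra)).
      apply Rabs_def2 in Hd. lra.
    - assert (s <= s - del); [|lra]. apply Hlub. intros x Hx.
      destruct (Rle_lt_dec x (s - del)); auto. exfalso; eauto. }
  assert (HDu : forall u, s < u <= t -> D u < 0).
  { intros u Hu. destruct (Rle_lt_dec 0 (D u)) as [q|q]; auto.
    assert (u <= s) by (apply Hub; unfold E; split; [lra|auto]). lra. }
  specialize (Hinc s t (conj Hs0 Hst) HDu). lra.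
Qed.

Lemma integral_0 f I : is_integral f 0 I -> I = 0.
Proof. intros [p E]. rewrite <- E. apply RiemannInt_P9. Qed.

Lemma integral_increment_le f1 f2 s t A1 B1 A2 B2 : 0 <= s <= t ->
  is_integral f1 s A1 -> is_integral f1 t B1 -> is_integral f2 s A2 -> is_integral f2 t B2 ->
  (forall u, s < u < t -> f2 u <= f1 u) -> B2 - A2 <= B1 - A1.
Proof.
  intros [Hs Hst] [p1s E1s] [p1t E1t] [p2s E2s] [p2t E2t] Hle.
  pose (q1 := RiemannInt_P23 p1t (conj Hs Hst)).
  pose (q2 := RiemannInt_P23 p2t (conj Hs Hst)).
  pose proof (RiemannInt_P26 p1s q1 p1t). pose proof (RiemannInt_P26 p2s q2 p2t).
  pose proof (RiemannInt_P19 q2 q1 Hst Hle). lra.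
Qed.

(* [X_i t = c_i + W t + beta * int_0^t f_i]; the common noise [W] cancels in [X1 - X2]. *)
Lemma integral_equation_comparison (X1 X2 f1 f2 W : R -> R) (c1 c2 beta : R) : 0 < beta ->
  cont_nonneg X1 -> cont_nonneg X2 -> c2 <= c1 ->
  (forall t, 0 <= t -> is_integral f1 t ((X1 t - c1 - W t) / beta)) ->
  (forall t, 0 <= t -> is_integral f2 t ((X2 t - c2 - W t) / beta)) ->
  (forall u, 0 <= u -> X1 u < X2 u -> f2 u <= f1 u) ->
  forall t, 0 <= t -> X2 t <= X1 t.
Proof.
  intros Hb Hc1 Hc2 Hc H1 H2 Hdrift t Ht.
  assert (Hdiv : forall x y, x / beta <= y / beta -> x <= y).
  { intros x y Hxy. apply (Rmult_le_reg_r (/ beta)); [apply Rinv_0_lt_compat; lra|exact Hxy]. }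
  enough (0 <= X1 t - X2 t) by lra.
  apply (ge0_of_nondecreasing_while_neg (fun x => X1 x - X2 x)); auto.
  - apply cont_nonneg_sub; assumption.
  - pose proof (integral_0 _ _ (H1 0 (Rle_refl 0))) as E1.
    pose proof (integral_0 _ _ (H2 0 (Rle_refl 0))) as E2.
    assert (0 <= X1 0 - c1 - W 0 /\ X2 0 - c2 - W 0 <= 0) as [].
    { split; apply Hdiv; unfold Rdiv in *; lra. }
    cbv beta; lra.
  - intros s u Hsu Hneg.
    assert (Hinc : (X2 u - c2 - W u) / beta - (X2 s - c2 - W s) / beta
                   <= (X1 u - c1 - W u) / beta - (X1 s - c1 - W s) / beta).
    { apply (integral_increment_le f1 f2 s u); try apply H1; try apply H2; try lra.
      intros v Hv. apply Hdrift; [lra|]. specialize (Hneg v ltac:(lra)). lra. }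
    enough (X2 u - X2 s <= X1 u - X1 s) by (cbv beta; lra).
    apply Hdiv. unfold Rdiv in *. lra.
Qed.

(** * The iteration scheme *)

Lemma in_YlowT_cont g Y k : in_YlowT g Y -> cont_nonneg (Y k).
Proof. intros [H _]. apply (proj1 (H k)). Qed.

Lemma in_YlowT_gt0 g Y k s : in_YlowT g Y -> 0 <= s -> 0 < Y k s.
Proof. intros [H _] Hs. apply (proj2 (H k)), Hs. Qed.

Lemma in_YlowT_slice g Y s : in_YlowT g Y -> 0 <= s -> in_Ylow g (fun b => Y b s).
Proof.
  intros [Hc Hav] Hs. split; [intros k; apply (proj2 (Hc k)), Hs|].
  intros eps He. destruct (Hav s Hs eps He) as [M HM]. exists M. intros m Hm.
  apply HM; auto; lra.
Qed.

Section Iteration.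
Variables (beta gamma : R) (B : Z -> R -> R) (n : nat).
Hypotheses (beta_gt0 : 0 < beta) (gamma_gt0 : 0 < gamma).

Lemma iteration_eq0 yin Y k t : iteration beta B yin n Y -> 0 <= t ->
  is_integral (fun s => / Y O k s) t ((Y O k t - yin k - Wd B k t) / beta).
Proof. intros [H _]; apply H. Qed.

Lemma iteration_eqS yin Y i k t : iteration beta B yin n Y -> (S i <= n)%nat -> 0 <= t ->
  is_integral (fun s => / Y (S i) k s - psi k (Y (S i) k s) (fun b => Y i b s)) t
    ((Y (S i) k t - yin k - Wd B k t) / beta).
Proof.
  intros [_ H] Hi Ht. pose proof (H (S i) ltac:(lia) k t Ht) as E.
  rewrite Nat.sub_succ, Nat.sub_0_r in E. exact E.
Qed.

Variables (yin : Z -> R) (Y : nat -> Z -> R -> R).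
Hypotheses (Y_iter : iteration beta B yin n Y) (Y_low : forall i, (i <= n)%nat -> in_YlowT gamma (Y i)).

Lemma iteration_antitone i : (i < n)%nat -> path_le (Y (S i)) (Y i).
Proof.
  induction i as [|i IH]; intros Hi k t Ht.
  - refine (integral_equation_comparison _ _ _ _ (Wd B k) (yin k) (yin k) beta beta_gt0 _ _
      (Rle_refl _) (fun s Hs => iteration_eq0 _ _ k s Y_iter Hs)
      (fun s Hs => iteration_eqS _ _ O k s Y_iter Hi Hs) _ t Ht);
      [apply (in_YlowT_cont gamma), Y_low; lia ..|intros u Hu Hlt].
    apply drift_le_inv; [apply (in_YlowT_gt0 gamma), Hu; apply Y_low; lia|lra|].
    intros; apply (in_YlowT_gt0 gamma), Hu; apply Y_low; lia.
  - refine (integral_equation_comparison _ _ _ _ (Wd B k) (yin k) (yin k) beta beta_gt0 _ _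
      (Rle_refl _) (fun s Hs => iteration_eqS _ _ i k s Y_iter (Nat.lt_le_incl _ _ Hi) Hs)
      (fun s Hs => iteration_eqS _ _ (S i) k s Y_iter Hi Hs) _ t Ht);
      [apply (in_YlowT_cont gamma), Y_low; lia ..|intros u Hu Hlt].
    apply (drift_antitone _ _ _ _ _ gamma gamma_gt0); [|lra| |].
    + apply (in_YlowT_gt0 gamma), Hu; apply Y_low; lia.
    + intros b; apply IH; [lia|exact Hu].
    + apply in_YlowT_slice, Hu; apply Y_low; lia.
Qed.

Variables (zin : Z -> R) (Zc : nat -> Z -> R -> R).
Hypotheses (Z_iter : iteration beta B zin n Zc) (Z_low : forall i, (i <= n)%nat -> in_YlowT gamma (Zc i)).

Lemma iteration_monotone_initial : (forall k, zin k <= yin k) ->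
  forall i, (i <= n)%nat -> path_le (Zc i) (Y i).
Proof.
  intros Hin. induction i as [|i IH]; intros Hi k t Ht.
  - refine (integral_equation_comparison _ _ _ _ (Wd B k) (yin k) (zin k) beta beta_gt0 _ _
      (Hin k) (fun s Hs => iteration_eq0 _ _ k s Y_iter Hs)
      (fun s Hs => iteration_eq0 _ _ k s Z_iter Hs) _ t Ht);
      [apply (in_YlowT_cont gamma); auto ..|intros u Hu Hlt].
    apply Rinv_le_contravar; [apply (in_YlowT_gt0 gamma), Hu; apply Y_low; lia|lra].
  - refine (integral_equation_comparison _ _ _ _ (Wd B k) (yin k) (zin k) beta beta_gt0 _ _
      (Hin k) (fun s Hs => iteration_eqS _ _ i k s Y_iter Hi Hs)
      (fun s Hs => iteration_eqS _ _ i k s Z_iter Hi Hs) _ t Ht);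
      [apply (in_YlowT_cont gamma); auto ..|intros u Hu Hlt].
    apply (drift_antitone _ _ _ _ _ gamma gamma_gt0); [|lra| |].
    + apply (in_YlowT_gt0 gamma), Hu; apply Y_low; lia.
    + intros b; apply IH; [lia|exact Hu].
    + apply in_YlowT_slice, Hu; apply Z_low; lia.
Qed.

End Iteration.

Theorem proposition3p1 (beta gamma : R) (n : nat) (B : Z -> R -> R)
    (yin zin : Z -> R) (Y Zc : nat -> Z -> R -> R) :
  1 <= beta -> 0 < gamma ->
  (forall b : Z, B b 0 = 0 /\ cont_nonneg (B b)) ->
  in_Ylow gamma yin -> in_Ylow gamma zin ->
  (forall i, (i <= n)%nat -> in_YlowT gamma (Y i)) ->
  (forall i, (i <= n)%nat -> in_YlowT gamma (Zc i)) ->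
  iteration beta B yin n Y -> iteration beta B zin n Zc ->
  (forall i, (i < n)%nat -> path_le (Y (S i)) (Y i)) /\
  ((forall k, zin k <= yin k) -> forall i, (i <= n)%nat -> path_le (Zc i) (Y i)).
Proof.
  intros Hbeta Hgamma _ _ _ HY HZ HYit HZit.
  assert (Hb : 0 < beta) by lra.
  split.
  - exact (iteration_antitone beta gamma B n Hb Hgamma yin Y HYit HY).
  - exact (iteration_monotone_initial beta gamma B n Hb Hgamma yin Y HYit HY zin Zc HZit HZ).
Qed.
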